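(* Let $m,N,N_0\in\mathbb{N}$, $A\in\mathbb{R}^{N\times N_0}$, $B\in\mathbb{R}^{m\times N}$ and $z\in\mathbb{R}^N$. Suppose $R=\{\alpha^q,\alpha^{q+1},\dots,\alpha^{q+r-1}\}\subset\mathbb{R}^{N_0}$ satisfies $|R|\geq N+1$, the sequence $(\alpha^k_1)_{k=q}^{q+r-1}$ is strictly decreasing, and $\alpha^k_j=0$ for all $j>1$ and all $k$. Then there exist $C\in\mathbb{R}^{m\times N_0}$, $v\in\mathbb{R}^m$ and a set $\mathcal{S}\subseteq R$ of the form $\mathcal{S}=\{\alpha^s,\alpha^{s+1},\dots,\alpha^{s+t-1}\}$ (consecutive indices) with $|\mathcal{S}|\geq |R|/(N+1)$ such that $B\rho(A\alpha+z)=C\alpha+v$ for all $\alpha\in\mathcal{S}$.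
   Context: $\rho(t)=\max\{0,t\}$, applied coordinatewise to vectors. *)

From HB Require Import structures.
From mathcomp Require Import all_boot all_order all_algebra.
Set Implicit Arguments. Unset Strict Implicit. Unset Printing Implicit Defensive.
Import Order.TTheory GRing.Theory Num.Theory.
Local Open Scope ring_scope.

Definition relu (R : realFieldType) (n : nat) (x : 'cV[R]_n) : 'cV[R]_n :=
  map_mx (fun t => Num.max 0 t) x.

(* the set {alpha^a, ..., alpha^(a+l-1)} as a duplicate-free list; its size is the cardinality *)
Definition pts (R : realFieldType) (n : nat) (alpha : nat -> 'cV[R]_n) (a l : nat)
  : seq 'cV[R]_n := undup [seq alpha k | k <- iota a l].

From HB Require Import structures.
From mathcomp Require Import all_boot all_order all_algebra.
From mathcomp Require Import zify lra.
Set Implicit Arguments. Unset Strict Implicit. Unset Printing Implicit Defensive.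
Import Order.TTheory GRing.Theory Num.Theory.

(* All points alpha^k lie on the first coordinate axis, so every
   pre-activation (A alpha^k + z)_i is an affine function of the strictly
   decreasing sequence alpha^k_1 and changes sign at most once along k.
   The at most N sign switches cut the segment into at most N + 1 runs of
   consecutive indices, one of which has length at least |R|/(N+1); on a run
   the activation pattern is constant, so rho acts there as a fixed diagonal
   0/1 matrix D and B rho(A alpha + z) = (B D A) alpha + B D z. *)

Definition switch (u : nat -> bool) k := u k != u k.+1.

Lemma count_le1 (T : eqType) (a : pred T) (s : seq T) :
  uniq s -> {in s &, forall x y, a x -> a y -> x = y} -> count a s <= 1.
Proof.
move=> s_uniq a_single; rewrite -size_filter.
case Es: (filter a s) => [|x s'] //.
have sub_x : {subset filter a s <= [:: x]}.
  have : x \in filter a s by rewrite Es mem_head.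
  rewrite mem_filter => /andP[ax xs] y; rewrite mem_filter inE => /andP[ay ys].
  by rewrite (a_single y x).
by rewrite -Es (uniq_leq_size (filter_uniq a s_uniq) sub_x).
Qed.

Lemma count_switch_le1 (u : nat -> bool) q r :
  (forall k1 k2 k3, q <= k1 -> k1 <= k2 <= k3 -> k3 < q + r ->
     u k1 = u k3 -> u k2 = u k1) ->
  count (switch u) (iota q r.-1) <= 1.
Proof.
move=> u_once; apply: count_le1 (iota_uniq _ _) _.
have no_two_switches k l : q <= k -> k < l -> l.+1 < q + r ->
    switch u k -> switch u l -> False.
  move=> qk kl lr sk sl.
  have [ek|nek] := eqVneq (u l.+1) (u k).
    by move: sk; rewrite /switch (u_once k k.+1 l.+1) ?eqxx //; lia.
  have ekS : u k.+1 = u l.+1.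
    by move: sk nek; rewrite /switch; case: (u k) (u k.+1) (u l.+1) => [] [] [].
  by move: sl; rewrite /switch (u_once k.+1 l l.+1) ?ekS ?eqxx //; lia.
move=> k l; rewrite !mem_iota => /andP[qk kr] /andP[ql lr] sk sl.
case: (ltngtP k l) => [kl|lk|//]; exfalso.
- by apply: no_two_switches sk sl => //; lia.
- by apply: no_two_switches sl sk => //; lia.
Qed.

Lemma count_exists_le_sum n (a : 'I_n -> pred nat) (s : seq nat) :
  count (fun k => [exists i, a i k]) s <= \sum_i count (a i) s.
Proof.
elim: s => [|k s IHs] /=; first by rewrite big1.
rewrite big_split /= leq_add //.
by case: existsP => [[i aik]|_] //; rewrite (bigD1 i) //= aik.
Qed.

Lemma switchfree_const (u : nat -> bool) s t :
  (forall k, s <= k -> k.+1 < s + t -> ~~ switch u k) ->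
  forall k, s <= k -> k < s + t -> u k = u s.
Proof.
move=> free; elim=> [|k IHk] sk kt; first by have -> : s = 0 by lia.
have [<-//|sk'] := eqVneq s k.+1.
have free_k := free k ltac:(lia) kt; rewrite /switch negbK in free_k.
by rewrite -(eqP free_k) IHk //; lia.
Qed.

Lemma long_breakfree_interval (P : pred nat) q r :
  exists s t, [/\ q <= s, s + t <= q + r,
    (forall k, s <= k -> k.+1 < s + t -> ~~ P k)
  & r <= (count P (iota q r.-1)).+1 * t].
Proof.
elim/ltn_ind: r q => r IHr q.
have [/hasP[c]|noP] := boolP (has P (iota q r.-1)); last first.
  exists q, r; split=> // [k qk kr|]; last exact: leq_pmull.
  by apply: contra noP => Pk; apply/hasP; exists k; rewrite ?mem_iota; try lia.
rewrite mem_iota => /andP[qc cr] Pc.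
have [rL rLE] : exists rL, rL = c.+1 - q by eexists.
have [rR rRE] : exists rR, rR = r - rL by eexists.
have [sL [tL [qsL stL freeL lenL]]] := IHr rL ltac:(lia) q.
have [sR [tR [qsR stR freeR lenR]]] := IHr rR ltac:(lia) c.+1.
have -> : iota q r.-1 = iota q rL.-1 ++ c :: iota c.+1 rR.-1.
  have -> : r.-1 = rL.-1 + (1 + rR.-1) by lia.
  by rewrite !iotaD /=; congr (iota _ _ ++ _ :: iota _ _); lia.
rewrite count_cat /= Pc add1n.
have [tLR|tRL] := leqP tL tR.
- by exists sR, tR; split=> //; nia.
- by exists sL, tL; split=> //; nia.
Qed.

Lemma long_constant_interval n (u : 'I_n -> nat -> bool) q r :
  (forall i, count (switch (u i)) (iota q r.-1) <= 1) ->
  exists s t, [/\ q <= s, s + t <= q + r,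
    (forall i k, s <= k -> k < s + t -> u i k = u i s) & r <= n.+1 * t].
Proof.
move=> switch_le1.
have [s [t [qs st free len]]] :=
  long_breakfree_interval (fun k => [exists i, switch (u i) k]) q r.
exists s, t; split=> //.
- move=> i; apply: switchfree_const => k sk kt.
  by apply: contra (free k sk kt) => sw; apply/existsP; exists i.
- apply: leq_trans len (leq_mul _ (leqnn t)); rewrite ltnS.
  apply: leq_trans (count_exists_le_sum (fun i => switch (u i)) _) _.
  by rewrite -[leqRHS]card_ord -sum1_card leq_sum.
Qed.

Local Open Scope ring_scope.

Lemma relu_diag (R : realFieldType) n (y : 'cV[R]_n) :
  relu y = diag_mx (\row_i (0 <= y i 0)%R%:R) *m y.
Proof.
apply/matrixP => i j; rewrite ord1 mul_diag_mx !mxE.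
by case: leP => [y_ge0|y_lt0]; rewrite ?mul1r ?mul0r ?max_r ?max_l // ltW.
Qed.

Lemma sign_affine_convex (R : realFieldType) (a c x1 x2 x3 : R) :
  x3 <= x2 <= x1 -> (0 <= a * x1 + c) = (0 <= a * x3 + c) ->
  (0 <= a * x2 + c) = (0 <= a * x1 + c).
Proof.
move=> /andP[x32 x21].
have between : (a * x3 <= a * x2 <= a * x1) || (a * x1 <= a * x2 <= a * x3).
  have [a_ge0|/ltW a_le0] := leP 0 a.
  - by rewrite (ler_wpM2l a_ge0 x32) (ler_wpM2l a_ge0 x21).
  - by rewrite (ler_wnM2l a_le0 x32) (ler_wnM2l a_le0 x21) orbT.
case/orP: between => /andP[ax2 ax1]; case: (leP 0 (a * x1 + c));
  case: (leP 0 (a * x2 + c)); case: (leP 0 (a * x3 + c)) => //; lra.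
Qed.

Section AxisSequence.

Variables (R : realFieldType) (N0 : nat) (o : 'I_N0).
Variables (alpha : nat -> 'cV[R]_N0) (q r : nat).
Hypothesis alpha_decr : forall k, (q <= k)%N -> (k.+1 < q + r)%N ->
  alpha k.+1 o 0 < alpha k o 0.
Hypothesis alpha_axis : forall k (j : 'I_N0), (q <= k)%N -> (k < q + r)%N ->
  j != o -> alpha k j 0 = 0.

Lemma alpha_coord_decr k l : (q <= k)%N -> (k < l)%N -> (l < q + r)%N ->
  alpha l o 0 < alpha k o 0.
Proof.
move=> qk kl lr.
have := @homo_ltn_in _ [pred k | q <= k < q + r]%N (fun k => alpha k o 0)
  (fun x y => y < x) (fun y x z yx zy => lt_trans zy yx).
apply; rewrite ?inE //; try lia.
- by move=> i j + + h; rewrite !inE; lia.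
- by move=> i; rewrite !inE => /andP[qi _] /andP[_ ir]; apply: alpha_decr.
Qed.

Lemma alpha_coord_nonincr k l : (q <= k)%N -> (k <= l)%N -> (l < q + r)%N ->
  alpha l o 0 <= alpha k o 0.
Proof.
move=> qk kl lr; case: (ltngtP k l) => [{}kl|lk|->//].
- exact: ltW (alpha_coord_decr qk kl lr).
- lia.
Qed.

Lemma size_pts_sub s t : (q <= s)%N -> (s + t <= q + r)%N ->
  size (pts alpha s t) = t.
Proof.
move=> qs st; rewrite /pts undup_id ?size_map ?size_iota //.
rewrite map_inj_in_uniq ?iota_uniq // => k l; rewrite !mem_iota.
move=> /andP[sk kt] /andP[sl lt] e_kl.
case: (ltngtP k l) => [kl|lk|//].
- have := alpha_coord_decr (k := k) (l := l) ltac:(lia) kl ltac:(lia).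
  by rewrite e_kl ltxx.
- have := alpha_coord_decr (k := l) (l := k) ltac:(lia) lk ltac:(lia).
  by rewrite e_kl ltxx.
Qed.

Lemma mulmx_alpha (N : nat) (A : 'M[R]_(N, N0)) k i :
  (q <= k)%N -> (k < q + r)%N -> (A *m alpha k) i 0 = A i o * alpha k o 0.
Proof.
move=> qk kr; rewrite mxE (bigD1 o) //= big1 ?addr0 // => j j_o.
by rewrite alpha_axis ?mulr0.
Qed.

Lemma count_switch_sign_le1 (N : nat) (A : 'M[R]_(N, N0)) (z : 'cV[R]_N) i :
  (count (switch (fun k => (0 <= (A *m alpha k + z) i 0)%R))
     (iota q r.-1) <= 1)%N.
Proof.
have affine k : (q <= k)%N -> (k < q + r)%N ->
    (A *m alpha k + z) i 0 = A i o * alpha k o 0 + z i 0.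
  by move=> qk kr; rewrite mxE mulmx_alpha.
apply: count_switch_le1 => k1 k2 k3 qk1 /andP[k12 k23] k3r.
rewrite !affine; try lia.
by apply: sign_affine_convex; rewrite !alpha_coord_nonincr //; lia.
Qed.

End AxisSequence.

Theorem lemma5p5 (R : realFieldType) (m N N0 : nat) (hN0 : (0 < N0)%N)
  (A : 'M[R]_(N, N0)) (B : 'M[R]_(m, N)) (z : 'cV[R]_N)
  (alpha : nat -> 'cV[R]_N0) (q r : nat)
  (hcard : (N.+1 <= size (pts alpha q r))%N)
  (hdec : forall k, (q <= k)%N -> (k.+1 < q + r)%N ->
            alpha k.+1 (Ordinal hN0) 0 < alpha k (Ordinal hN0) 0)
  (hzero : forall k (j : 'I_N0), (q <= k)%N -> (k < q + r)%N ->
            (0 < val j)%N -> alpha k j 0 = 0) :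
  exists (C : 'M[R]_(m, N0)) (v : 'cV[R]_m) (s t : nat),
    [/\ (q <= s)%N, (s + t <= q + r)%N,
        (size (pts alpha q r))%:R / (N.+1)%:R <= (size (pts alpha s t))%:R :> R
      & forall k, (s <= k)%N -> (k < s + t)%N ->
          B *m relu (A *m alpha k + z) = C *m alpha k + v].
Proof.
have axis k j : (q <= k)%N -> (k < q + r)%N -> j != Ordinal hN0 ->
    alpha k j 0 = 0.
  move=> qk kr j_o; apply: hzero; rewrite // lt0n.
  by apply: contraNneq j_o => j0; apply/eqP/val_inj.
pose y k := A *m alpha k + z.
have [s [t [qs st pattern len]]] := long_constant_interval
  (u := fun i k => 0 <= y k i 0) (count_switch_sign_le1 hdec axis A z).
pose D : 'M[R]_N := diag_mx (\row_i (0 <= y s i 0)%R%:R).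
exists (B *m D *m A), (B *m D *m z), s, t; split=> //.
- rewrite !(size_pts_sub hdec) // ler_pdivrMr ?ltr0n // -natrM ler_nat mulnC.
  exact: len.
- move=> k sk kt; rewrite -/(y k) relu_diag.
  have -> : \row_i (0 <= y k i 0)%R%:R = \row_i (0 <= y s i 0)%R%:R :> 'rV[R]_N.
    by apply/rowP => i; rewrite [LHS]mxE [RHS]mxE pattern.
  by rewrite /y !mulmxDr !mulmxA.
Qed.
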